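(* Let $h>0$, $\beta>0$, $f(x)=hx$, $g(r)=\frac12\log(1-r^2)+\frac{\beta^2}{2}(1-r^2)^2$, $q_P=\max\big(1-\frac{1}{\sqrt2\beta},0\big)$, $\mathrm{Plef}(\beta)=[\sqrt{q_P},1]$, and $\tilde{\mathcal{B}}(\alpha,r)=f(r\alpha)+\sqrt2\beta r^2\sqrt{1-\alpha^2}+g(r)$. Then $$\sup_{r\in\mathrm{Plef}(\beta),\,\alpha\in[-1,1]}\tilde{\mathcal{B}}(\alpha,r)=\sup_{q\in[q_P,1)}\mathscr{B}(q),\qquad \mathscr{B}(q)=\sqrt{h^2q+2\beta^2q^2}+\frac12\log(1-q)+\frac{\beta^2}{2}(1-q)^2,$$ where $\mathscr{B}$ is concave on $[q_P,1)$ with a unique maximizer $\hat q$, which is the unique solution in $(q_P,1)$ of $$\frac{q}{h^2+2q\beta^2}=(1-q)^2.$$ Moreover the unique maximizer of the left-hand side is $\hat r=\sqrt{\hat q}$, $\hat\alpha=\frac{h}{\sqrt{h^2+2\beta^2\hat q}}$.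
   Context: At $r=1$, $g(1)=-\infty$ and hence $\tilde{\mathcal{B}}(\alpha,1)=-\infty$. *)

From HB Require Import structures.
From mathcomp Require Import all_boot all_order all_algebra.
From mathcomp Require Import all_classical all_reals all_analysis.
Set Implicit Arguments. Unset Strict Implicit. Unset Printing Implicit Defensive.
Import Order.TTheory GRing.Theory Num.Theory.
Local Open Scope classical_set_scope.
Local Open Scope ring_scope.

Section Defs.
Variable R : realType.

Definition f_lin (h x : R) : R := h * x.

Definition g_fun (beta r : R) : \bar R :=
  if r ^+ 2 < 1 then (ln (1 - r ^+ 2) / 2 + beta ^+ 2 / 2 * (1 - r ^+ 2) ^+ 2)%:E
  else -oo%E.

Definition qP (beta : R) : R := Num.max (1 - 1 / (Num.sqrt 2 * beta)) 0.

Definition Plef (beta : R) : set R := `[Num.sqrt (qP beta), 1].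

Definition Btilde (h beta alpha r : R) : \bar R :=
  ((f_lin h (r * alpha) + Num.sqrt 2 * beta * r ^+ 2 * Num.sqrt (1 - alpha ^+ 2))%:E
   + g_fun beta r)%E.

Definition Bscr (h beta q : R) : R :=
  Num.sqrt (h ^+ 2 * q + 2 * beta ^+ 2 * q ^+ 2) + ln (1 - q) / 2
  + beta ^+ 2 / 2 * (1 - q) ^+ 2.

End Defs.

From HB Require Import structures.
From mathcomp Require Import all_boot all_order all_algebra.
From mathcomp Require Import all_classical all_reals all_analysis.
From mathcomp Require Import ring lra.
Import Order.TTheory GRing.Theory Num.Theory.
Import numFieldNormedType.Exports.
Local Open Scope classical_set_scope.
Local Open Scope ring_scope.
Set Implicit Arguments. Unset Strict Implicit.

(* For fixed r the alpha-dependent part h r alpha + sqrt 2 beta r^2 sqrt (1 - alpha^2) of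
   Btilde is a dot product with the unit vector (alpha, sqrt (1 - alpha^2)), so by
   Cauchy-Schwarz its maximum is sqrt (h^2 r^2 + 2 beta^2 r^4), attained only at
   alpha = h / sqrt (h^2 + 2 beta^2 r^2).  Hence, with q = r^2, the left-hand side reduces
   to Bscr on [q_P, 1) (Btilde is -oo at r = 1).  There Bscr lies below each of its
   tangents, strictly so away from the contact point: sqrt (h^2 q + 2 beta^2 q^2) is
   strictly concave, and v |-> ln v / 2 + beta^2 v^2 / 2 is concave on (0, 1 - q_P]
   precisely because 2 beta^2 (1 - q_P)^2 <= 1, which is what the choice of q_P ensures.
   So Bscr is concave, and where its slope vanishes, i.e. at a solution of
   q / (h^2 + 2 q beta^2) = (1 - q)^2, it has a strict global maximum.  A solution exists
   by the intermediate value theorem and is unique because two strict global maxima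
   cannot coexist. *)

Section UnitCircle.
Variable R : realType.
Implicit Types u v a w : R.

Lemma lagrange_circle u v a w : w ^+ 2 = 1 - a ^+ 2 ->
  u ^+ 2 + v ^+ 2 - (u * a + v * w) ^+ 2 = (u * w - v * a) ^+ 2.
Proof.
move=> w2; have -> : u ^+ 2 + v ^+ 2 = (u ^+ 2 + v ^+ 2) * (w ^+ 2 + a ^+ 2).
  by rewrite w2 subrK mulr1.
ring.
Qed.

Lemma sqr_sqrt_one_sub a : -1 <= a <= 1 -> Num.sqrt (1 - a ^+ 2) ^+ 2 = 1 - a ^+ 2.
Proof. by case/andP=> ? ?; rewrite sqr_sqrtr // subr_ge0; nra. Qed.

Lemma circle_dot_le u v a : -1 <= a <= 1 ->
  u * a + v * Num.sqrt (1 - a ^+ 2) <= Num.sqrt (u ^+ 2 + v ^+ 2).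
Proof.
move=> /sqr_sqrt_one_sub w2; apply: le_trans (ler_norm _) _.
rewrite -sqrtr_sqr ler_sqrt ?addr_ge0 ?sqr_ge0 //.
by rewrite -subr_ge0 (lagrange_circle u v w2) sqr_ge0.
Qed.

Lemma circle_dot_eq u v a : -1 <= a <= 1 ->
  u * a + v * Num.sqrt (1 - a ^+ 2) = Num.sqrt (u ^+ 2 + v ^+ 2) ->
  Num.sqrt (u ^+ 2 + v ^+ 2) * a = u.
Proof.
move=> /sqr_sqrt_one_sub w2; set w := Num.sqrt _ => eq_dot.
have /eqP : (u * w - v * a) ^+ 2 = 0.
  by rewrite -(lagrange_circle u v w2) eq_dot sqr_sqrtr ?addr_ge0 ?sqr_ge0 // subrr.
rewrite sqrf_eq0 subr_eq0 => /eqP vaE.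
rewrite -eq_dot mulrDl.
have -> : v * w * a = u * w ^+ 2 by rewrite mulrAC -vaE; ring.
by rewrite w2; ring.
Qed.

Lemma circle_dot_max u v : 0 < u -> 0 <= v ->
  let a := u / Num.sqrt (u ^+ 2 + v ^+ 2) in
  -1 <= a <= 1 /\ u * a + v * Num.sqrt (1 - a ^+ 2) = Num.sqrt (u ^+ 2 + v ^+ 2).
Proof.
move=> u0 v0 a; set N := Num.sqrt _ in a *.
have N2 : N ^+ 2 = u ^+ 2 + v ^+ 2 by rewrite sqr_sqrtr ?addr_ge0 ?sqr_ge0.
have uN : u <= N.
  by rewrite -(ger0_norm (ltW u0)) -sqrtr_sqr ler_sqrt ?addr_ge0 ?sqr_ge0 // lerDl sqr_ge0.
have N0 : 0 < N := lt_le_trans u0 uN.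
have a01 : 0 <= a <= 1.
  by rewrite /a divr_ge0 ?(ltW u0) ?(ltW N0) //= ler_pdivrMr // mul1r.
have w : Num.sqrt (1 - a ^+ 2) = v / N.
  rewrite -(ger0_norm (divr_ge0 v0 (ltW N0))) -sqrtr_sqr; congr Num.sqrt.
  by rewrite /a !expr_div_n N2; field; rewrite -N2 sqrf_eq0 gt_eqF.
split; first by case/andP: a01 => ? ?; apply/andP; split => //; lra.
rewrite w /a.
have -> : u * (u / N) + v * (v / N) = N ^+ 2 / N by rewrite N2; field; rewrite gt_eqF.
by rewrite expr2 mulfK ?gt_eqF.
Qed.

Lemma circle_dot_lt u v a : 0 < u -> -1 <= a <= 1 ->
  a != u / Num.sqrt (u ^+ 2 + v ^+ 2) ->
  u * a + v * Num.sqrt (1 - a ^+ 2) < Num.sqrt (u ^+ 2 + v ^+ 2).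
Proof.
move=> u0 a1 neq_a; rewrite lt_neqAle circle_dot_le // andbT.
apply: contra neq_a => /eqP/(circle_dot_eq a1) Na; apply/eqP.
have N0 : 0 < Num.sqrt (u ^+ 2 + v ^+ 2).
  by rewrite sqrtr_gt0 ltr_wpDr ?sqr_ge0 ?exprn_gt0.
by rewrite -{1}Na mulrC mulKf ?gt_eqF.
Qed.

End UnitCircle.

Section DeriveSign.
Variable R : realType.

Lemma derive1_sign_min (f : R -> R) (m y : R) :
  {in `[Num.min m y, Num.max m y], forall x, derivable f x 1} ->
  {in `]Num.min m y, Num.max m y[, forall x, 0 <= (x - m) * derive1 f x} ->
  f m <= f y.
Proof.
move=> df sgn; have [ym|my] := leP y m.
- rewrite min_r ?max_l // in df sgn.
  have dfo : {in `]y, m[, forall x, derivable f x 1}.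
    by move=> x /subset_itv_oo_cc; apply: df.
  apply: (ler0_derive1_le_cc dfo _ (derivable_within_continuous df));
    rewrite ?in_itv /= ?lexx ?ym //.
  move=> x xI; have := sgn x xI; move: xI; rewrite in_itv /= => /andP[_ xm].
  by rewrite nmulr_rge0 // subr_lt0.
- rewrite min_l ?max_r ?ltW // in df sgn.
  have dfo : {in `]m, y[, forall x, derivable f x 1}.
    by move=> x /subset_itv_oo_cc; apply: df.
  apply: (ger0_derive1_le_cc dfo _ (derivable_within_continuous df));
    rewrite ?in_itv /= ?lexx ?ltW //.
  move=> x xI; have := sgn x xI; move: xI; rewrite in_itv /= => /andP[mx _].
  by rewrite pmulr_rge0 // subr_gt0.
Qed.

End DeriveSign.

Definition lnsq (R : realType) (c y : R) := ln y / 2 + c / 2 * y ^+ 2.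

Lemma lnsq_tangent (R : realType) (c K m y : R) : 0 <= c -> 2 * c * K ^+ 2 <= 1 ->
  0 < m <= K -> 0 < y <= K ->
  lnsq c y <= lnsq c m + ((2 * m)^-1 + c * m) * (y - m).
Proof.
move=> c0 cK /andP[m0 mK] /andP[y0 yK].
pose gap x := lnsq c m + ((2 * m)^-1 + c * m) * (x - m) - lnsq c x.
suff : gap m <= gap y by rewrite /gap subrr mulr0 addr0 subrr subr_ge0.
have gap' (x : R) : 0 < x ->
    is_derive x 1 gap (((2 * m)^-1 + c * m) - ((2 * x)^-1 + c * x)).
  move=> x0; have := is_derive1_ln x0; rewrite /gap /lnsq => ?.
  by apply: is_derive_eq; rewrite /GRing.scale /=; field; rewrite !gt_eqF.
have between (x : R) : x \in `[Num.min m y, Num.max m y] -> 0 < x <= K.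
  rewrite in_itv /= => /andP[lex lex'].
  by rewrite (lt_le_trans _ lex) ?lt_min ?m0 ?y0 //= (le_trans lex') // ge_max mK.
apply: derive1_sign_min => x xI.
  by have /andP[x0 _] := between x xI; have [] := gap' x x0.
have /andP[x0 xK] := between x (subset_itv_oo_cc xI).
rewrite derive1E; case: (gap' x x0) => _ ->.
have -> : (x - m) * ((2 * m)^-1 + c * m - ((2 * x)^-1 + c * x))
        = (x - m) ^+ 2 * (1 - 2 * c * m * x) / (2 * m * x).
  by field; rewrite !gt_eqF.
apply: divr_ge0; last by rewrite !mulr_ge0 // ltW.
rewrite mulr_ge0 ?sqr_ge0 // subr_ge0; apply: le_trans cK.
by rewrite -mulrA ler_wpM2l ?mulr_ge0 // expr2 ler_pM // ltW.
Qed.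

Definition sqrt_quad (R : realType) (a b q : R) := Num.sqrt (a * q + b * q ^+ 2).

Lemma sqrt_quad_tangent_lt (R : realType) (a b p q : R) :
  0 < a -> 0 <= b -> 0 < p -> 0 <= q -> q != p ->
  sqrt_quad a b q
  < sqrt_quad a b p + (a + 2 * b * p) / (2 * sqrt_quad a b p) * (q - p).
Proof.
move=> a0 b0 p0 q0 qp; rewrite /sqrt_quad.
set A := Num.sqrt (a * p + _); set S := Num.sqrt (a * q + _).
have A2 : A ^+ 2 = a * p + b * p ^+ 2.
  by rewrite sqr_sqrtr // addr_ge0 ?mulr_ge0 ?sqr_ge0 // ltW.
have S2 : S ^+ 2 = a * q + b * q ^+ 2.
  by rewrite sqr_sqrtr // addr_ge0 ?mulr_ge0 ?sqr_ge0 // ltW.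
have ap0 := mulr_gt0 a0 p0; have bp0 := mulr_ge0 b0 (sqr_ge0 p).
have A0 : 0 < A by rewrite sqrtr_gt0; lra.
set E := a * (p + q) + 2 * b * p * q.
have E0 : 0 < E.
  have := mulr_ge0 (ltW a0) q0; have := mulr_ge0 (mulr_ge0 b0 (ltW p0)) q0.
  rewrite /E; lra.
have -> : A + (a + 2 * b * p) / (2 * A) * (q - p) = E / (2 * A).
  have -> : E = 2 * A ^+ 2 + (a + 2 * b * p) * (q - p) by rewrite A2 /E; ring.
  by field; rewrite gt_eqF.
rewrite ltr_pdivlMr ?mulr_gt0 // -(ltr_pXn2r (_ : 0 < 2)%N) ?nnegrE
  ?mulr_ge0 ?sqrtr_ge0 ?ltW // -subr_gt0.
have -> : E ^+ 2 - (S * (2 * A)) ^+ 2 = a ^+ 2 * (p - q) ^+ 2.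
  by rewrite !exprMn A2 S2 /E; ring.
by rewrite mulr_gt0 ?(exprn_gt0 2 a0) // lt_def sqrf_eq0 subr_eq0 eq_sym qp sqr_ge0.
Qed.

Lemma conv_le_of_tangents (R : realType) (f : R -> R) (s x y t : R) :
  0 <= t <= 1 -> let m := t * x + (1 - t) * y in
  f x <= f m + s * (x - m) -> f y <= f m + s * (y - m) ->
  t * f x + (1 - t) * f y <= f m.
Proof.
move=> /andP[t0 t1] m fx fy.
have -> : f m = t * (f m + s * (x - m)) + (1 - t) * (f m + s * (y - m)) by rewrite /m; ring.
by rewrite lerD // ler_wpM2l // subr_ge0.
Qed.

Lemma in_itv_set (R : realType) (x y r : R) : (r \in `[x, y[%classic) = (x <= r < y).
Proof. by apply/idP/idP; rewrite in_setE /= in_itv. Qed.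

Lemma ereal_sup_attained (R : realType) (S : set (\bar R)) (M : \bar R) :
  S M -> ubound S M -> ereal_sup S = M.
Proof.
by move=> SM ubM; apply/eqP; rewrite eq_le ge_ereal_sup //= ereal_sup_ubound.
Qed.

Section Threshold.
Variables (R : realType) (b : R).
Hypothesis b0 : 0 < b.

Let t := (Num.sqrt 2 * b)^-1.

Let t_gt0 : 0 < t.
Proof. by rewrite invr_gt0 mulr_gt0 ?sqrtr_gt0. Qed.

Let sqr_t : 2 * b ^+ 2 * t ^+ 2 = 1.
Proof.
by rewrite /t exprVn exprMn sqr_sqrtr //; field; rewrite gt_eqF.
Qed.

Let qPE : qP b = Num.max (1 - t) 0.
Proof. by rewrite /qP div1r. Qed.

Lemma qP_ge0 : 0 <= qP b.
Proof. by rewrite qPE le_max lexx orbT. Qed.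

Lemma qP_lt1 : qP b < 1.
Proof. by rewrite qPE gt_max ltrBlDr ltrDl t_gt0 ltr01. Qed.

Lemma qP_eq0_or_tight : qP b = 0 \/ 2 * b ^+ 2 * (1 - qP b) ^+ 2 = 1.
Proof.
rewrite qPE; have [_|_] := leP (1 - t) 0; first by left.
by right; rewrite opprB addrC subrK.
Qed.

Lemma qP_concave_bound : 2 * b ^+ 2 * (1 - qP b) ^+ 2 <= 1.
Proof.
rewrite qPE; have [t1|_] := leP (1 - t) 0; last first.
  by rewrite opprB addrC subrK sqr_t.
rewrite subr0 expr1n mulr1 -[leRHS]sqr_t ler_peMr ?mulr_ge0 ?sqr_ge0 ?(ltW b0) //.
by rewrite exprn_ege1 // -subr_le0.
Qed.

End Threshold.

Lemma in_Plef (R : realType) (b r : R) : (r \in Plef b) = (Num.sqrt (qP b) <= r <= 1).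
Proof. by apply/idP/idP; rewrite in_setE /Plef /= in_itv. Qed.

Section Bscr.
Variables (R : realType) (h b : R).
Hypotheses (h0 : 0 < h) (b0 : 0 < b).

Lemma BscrE q : Bscr h b q = sqrt_quad (h ^+ 2) (2 * b ^+ 2) q + lnsq (b ^+ 2) (1 - q).
Proof. by rewrite /Bscr /sqrt_quad /lnsq addrA. Qed.

Definition Bscr_slope p :=
  (h ^+ 2 + 2 * (2 * b ^+ 2) * p) / (2 * sqrt_quad (h ^+ 2) (2 * b ^+ 2) p)
  - ((2 * (1 - p))^-1 + b ^+ 2 * (1 - p)).

Lemma Bscr_tangent_lt p q : qP b <= p < 1 -> 0 < p -> qP b <= q < 1 -> q != p ->
  Bscr h b q < Bscr h b p + Bscr_slope p * (q - p).
Proof.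
move=> /andP[Pp p1] p0 /andP[Pq q1] qp.
have q0 := le_trans (qP_ge0 b) Pq.
have := sqrt_quad_tangent_lt (exprn_gt0 2 h0) (mulr_ge0 (ler0n _ 2) (sqr_ge0 b)) p0 q0 qp.
have := @lnsq_tangent _ (b ^+ 2) (1 - qP b) (1 - p) (1 - q) (sqr_ge0 b).
rewrite qP_concave_bound // !subr_gt0 p1 q1 !lerD2l !lerN2 Pp Pq => /(_ isT isT isT).
rewrite !BscrE /Bscr_slope; lra.
Qed.

Lemma Bscr_tangent_le p q : qP b <= p < 1 -> 0 < p -> qP b <= q < 1 ->
  Bscr h b q <= Bscr h b p + Bscr_slope p * (q - p).
Proof.
move=> Pp p0 Pq; have [->|qp] := eqVneq q p; first by rewrite subrr mulr0 addr0.
exact/ltW/Bscr_tangent_lt.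
Qed.

Lemma Bscr_slope_root p : 0 < p < 1 ->
  p / (h ^+ 2 + 2 * p * b ^+ 2) = (1 - p) ^+ 2 -> Bscr_slope p = 0.
Proof.
move=> /andP[p0 p1] rootp.
set v := 1 - p; set d := h ^+ 2 + 2 * p * b ^+ 2 in rootp.
have v0 : 0 < v by rewrite subr_gt0.
have d0 : 0 < d.
  by have := exprn_gt0 2 h0; have := mulr_ge0 (ltW p0) (sqr_ge0 b); rewrite /d; lra.
have pE : p = v ^+ 2 * d by rewrite -rootp mulfVK ?gt_eqF.
have sqE : sqrt_quad (h ^+ 2) (2 * b ^+ 2) p = v * d.
  rewrite /sqrt_quad.
  have -> : h ^+ 2 * p + 2 * b ^+ 2 * p ^+ 2 = (v * d) ^+ 2.
    transitivity (p * d); first by rewrite /d; ring.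
    by rewrite {1}pE; ring.
  by rewrite sqrtr_sqr ger0_norm // mulr_ge0 ?ltW.
rewrite /Bscr_slope sqE -/v.
have -> : h ^+ 2 + 2 * (2 * b ^+ 2) * p = d + 2 * b ^+ 2 * p by rewrite /d; ring.
have -> : (d + 2 * b ^+ 2 * p) / (2 * (v * d)) - ((2 * v)^-1 + b ^+ 2 * v)
          = b ^+ 2 * (p - v ^+ 2 * d) / (v * d).
  by field; rewrite !gt_eqF.
by rewrite -pE subrr mulr0 mul0r.
Qed.

Lemma Bscr_lt_root p q : qP b < p < 1 ->
  p / (h ^+ 2 + 2 * p * b ^+ 2) = (1 - p) ^+ 2 ->
  qP b <= q < 1 -> q != p -> Bscr h b q < Bscr h b p.
Proof.
move=> /andP[Pp p1] rootp Pq qp.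
have p0 := le_lt_trans (qP_ge0 b) Pp.
have Pp1 : qP b <= p < 1 by rewrite ltW.
have := Bscr_tangent_lt Pp1 p0 Pq qp.
by rewrite Bscr_slope_root ?p0 // mul0r addr0.
Qed.

Lemma Bscr_concave x y t : qP b <= x < 1 -> qP b <= y < 1 -> 0 <= t <= 1 ->
  t * Bscr h b x + (1 - t) * Bscr h b y <= Bscr h b (t * x + (1 - t) * y).
Proof.
move=> /andP[Px x1] /andP[Py y1] /andP[t0 t1].
have [->|t_neq0] := eqVneq t 0; first by rewrite !mul0r !add0r subr0 !mul1r.
have [->|t_neq1] := eqVneq t 1; first by rewrite subrr !mul0r !addr0 !mul1r.
have {t_neq0 t0}t0 : 0 < t by rewrite lt_def t_neq0.
have {t_neq1 t1}t1 : t < 1 by rewrite lt_neqAle t_neq1.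
have qP0 := qP_ge0 b.
have Pm : qP b <= t * x + (1 - t) * y < 1 by apply/andP; split; nra.
(* Bscr has no tangent at 0, and for 0 < t < 1 the combination t x + (1 - t) y is 0 only if x = y = 0. *)
have [m0|] := ltP 0 (t * x + (1 - t) * y).
  apply: (conv_le_of_tangents (s := Bscr_slope (t * x + (1 - t) * y)));
    by [rewrite !ltW | apply: Bscr_tangent_le; rewrite // ?Px ?Py].
move=> m0; have x0 : x = 0 by nra.
have y0 : y = 0 by nra.
by rewrite x0 y0 !mulr0 addr0 -mulrDl addrC subrK mul1r.
Qed.

Lemma Bscr_root_exists :
  exists2 p, qP b < p < 1 & p / (h ^+ 2 + 2 * p * b ^+ 2) = (1 - p) ^+ 2.
Proof.
pose gap q := (1 - q) ^+ 2 * (h ^+ 2 + 2 * q * b ^+ 2) - q.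
have gap1 : gap 1 = -1 by rewrite /gap subrr expr0n /= mul0r sub0r.
have gapP : 0 < gap (qP b).
  have -> : gap (qP b) = (1 - qP b) ^+ 2 * h ^+ 2
      + qP b * (2 * b ^+ 2 * (1 - qP b) ^+ 2 - 1) by rewrite /gap; ring.
  have : 0 < (1 - qP b) ^+ 2 * h ^+ 2.
    by rewrite mulr_gt0 ?exprn_gt0 // subr_gt0 qP_lt1.
  by case: (qP_eq0_or_tight b0) => ->; lra.
have gap_cont : {within `[qP b, 1], continuous gap}.
  by apply: derivable_within_continuous => x _; rewrite /gap.
have gap_sign : Num.min (gap (qP b)) (gap 1) <= 0 <= Num.max (gap (qP b)) (gap 1).
  by rewrite gap1 ge_min le_max; apply/andP; split; apply/orP; [right | left]; lra.
have [p] := IVT (ltW (qP_lt1 b0)) gap_cont gap_sign.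
rewrite in_itv /= => /andP[Pp p1] gap0.
have gapp : p = (1 - p) ^+ 2 * (h ^+ 2 + 2 * p * b ^+ 2) by move: gap0; rewrite /gap; lra.
have d0 : 0 < h ^+ 2 + 2 * p * b ^+ 2.
  have := mulr_ge0 (le_trans (qP_ge0 b) Pp) (sqr_ge0 b).
  by have := exprn_gt0 2 h0; lra.
exists p; last by rewrite {1}gapp mulfK ?gt_eqF.
rewrite !lt_neqAle Pp p1 !andbT; apply/andP; split.
- by apply/eqP => Pp_eq; move: gapP; rewrite Pp_eq gap0 ltxx.
- by apply/eqP => p_eq1; move: gap0; rewrite p_eq1 gap1; lra.
Qed.

Lemma Bscr_root_unique p q : qP b < p < 1 -> qP b < q < 1 ->
  p / (h ^+ 2 + 2 * p * b ^+ 2) = (1 - p) ^+ 2 ->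
  q / (h ^+ 2 + 2 * q * b ^+ 2) = (1 - q) ^+ 2 -> q = p.
Proof.
move=> p_itv q_itv rootp rootq; apply/eqP/negP => /negP qp.
have le_itv x : qP b < x < 1 -> qP b <= x < 1 by case/andP=> /ltW -> ->.
have := Bscr_lt_root p_itv rootp (le_itv _ q_itv) qp.
by rewrite ltNge ltW // Bscr_lt_root ?le_itv // eq_sym.
Qed.

End Bscr.

Definition Btilde_fin (R : realType) (h b a r : R) :=
  f_lin h (r * a) + Num.sqrt 2 * b * r ^+ 2 * Num.sqrt (1 - a ^+ 2).

Definition alpha_hat (R : realType) (h b q : R) := h / Num.sqrt (h ^+ 2 + 2 * b ^+ 2 * q).

Section Btilde.
Variables (R : realType) (h b : R).
Hypotheses (h0 : 0 < h) (b0 : 0 < b).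

Lemma BtildeE a r : r ^+ 2 < 1 ->
  Btilde h b a r = (Btilde_fin h b a r + lnsq (b ^+ 2) (1 - r ^+ 2))%:E.
Proof. by move=> r1; rewrite /Btilde /g_fun r1. Qed.

Lemma Btilde_Ny a r : 1 <= r ^+ 2 -> Btilde h b a r = -oo%E.
Proof. by move=> r1; rewrite /Btilde /g_fun ltNge r1 /= addeNy. Qed.

Let Btilde_fin_circle a r : Btilde_fin h b a r
  = (h * r) * a + (Num.sqrt 2 * b * r ^+ 2) * Num.sqrt (1 - a ^+ 2).
Proof. by rewrite /Btilde_fin /f_lin mulrA. Qed.

Let circle_norm r : Num.sqrt ((h * r) ^+ 2 + (Num.sqrt 2 * b * r ^+ 2) ^+ 2)
  = sqrt_quad (h ^+ 2) (2 * b ^+ 2) (r ^+ 2).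
Proof. by rewrite /sqrt_quad !exprMn sqr_sqrtr. Qed.

Let circle_argmax r : 0 < r ->
  h * r / sqrt_quad (h ^+ 2) (2 * b ^+ 2) (r ^+ 2) = alpha_hat h b (r ^+ 2).
Proof.
move=> r0; rewrite /sqrt_quad /alpha_hat.
have -> : h ^+ 2 * r ^+ 2 + 2 * b ^+ 2 * (r ^+ 2) ^+ 2
          = r ^+ 2 * (h ^+ 2 + 2 * b ^+ 2 * r ^+ 2) by ring.
by rewrite sqrtrM ?sqr_ge0 // sqrtr_sqr gtr0_norm // invfM mulrA mulfK ?gt_eqF.
Qed.

Lemma Btilde_fin_le a r : -1 <= a <= 1 ->
  Btilde_fin h b a r <= sqrt_quad (h ^+ 2) (2 * b ^+ 2) (r ^+ 2).
Proof. by move=> a1; rewrite Btilde_fin_circle -circle_norm circle_dot_le. Qed.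

Lemma Btilde_fin_lt a r : 0 < r -> -1 <= a <= 1 -> a != alpha_hat h b (r ^+ 2) ->
  Btilde_fin h b a r < sqrt_quad (h ^+ 2) (2 * b ^+ 2) (r ^+ 2).
Proof.
move=> r0 a1 a_neq; rewrite Btilde_fin_circle -circle_norm circle_dot_lt ?mulr_gt0 //.
by rewrite circle_norm circle_argmax.
Qed.

Lemma Btilde_fin_alpha_hat r : 0 < r ->
  -1 <= alpha_hat h b (r ^+ 2) <= 1 /\
  Btilde_fin h b (alpha_hat h b (r ^+ 2)) r = sqrt_quad (h ^+ 2) (2 * b ^+ 2) (r ^+ 2).
Proof.
move=> r0; rewrite -circle_argmax // Btilde_fin_circle -circle_norm.
apply: circle_dot_max; first by rewrite mulr_gt0.
by rewrite !mulr_ge0 ?sqrtr_ge0 ?sqr_ge0 ?ltW.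
Qed.

End Btilde.

Section Maximizer.
Variables (R : realType) (h b qh : R).
Hypotheses (h0 : 0 < h) (b0 : 0 < b) (qh_itv : qP b < qh < 1)
  (qh_root : qh / (h ^+ 2 + 2 * qh * b ^+ 2) = (1 - qh) ^+ 2).

Let qh0 : 0 < qh.
Proof. by case/andP: qh_itv => /(le_lt_trans (qP_ge0 b)). Qed.

Let sqr_sqrt_qh : Num.sqrt qh ^+ 2 = qh.
Proof. by rewrite sqr_sqrtr // ltW. Qed.

Lemma sqrt_qh_Plef : Num.sqrt qh \in Plef b.
Proof.
case/andP: qh_itv => Pqh qh1.
by rewrite in_Plef ler_sqrt ?(ltW qh0) ?(ltW Pqh) //= -sqrtr1 ler_sqrt ?(ltW qh1).
Qed.

Lemma Btilde_hat :
  alpha_hat h b qh \in `[-1, 1] /\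
  Btilde h b (alpha_hat h b qh) (Num.sqrt qh) = (Bscr h b qh)%:E.
Proof.
have rh0 : 0 < Num.sqrt qh by rewrite sqrtr_gt0.
have [a1 fin_eq] := Btilde_fin_alpha_hat h0 b0 rh0; rewrite sqr_sqrt_qh in a1 fin_eq.
have qh1 : Num.sqrt qh ^+ 2 < 1 by rewrite sqr_sqrt_qh; case/andP: qh_itv.
by rewrite in_itv /= a1 BtildeE // fin_eq sqr_sqrt_qh -BscrE.
Qed.

Lemma Btilde_lt_hat r a : r \in Plef b -> a \in `[-1, 1] ->
  (r, a) != (Num.sqrt qh, alpha_hat h b qh) ->
  (Btilde h b a r < (Bscr h b qh)%:E)%E.
Proof.
rewrite in_Plef in_itv /= => /andP[Pr r1] a1 ra_neq.
have r0 : 0 <= r := le_trans (sqrtr_ge0 _) Pr.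
have [r2_ge1|r2_lt1] := leP 1 (r ^+ 2); first by rewrite Btilde_Ny // ltNyr.
rewrite BtildeE // lte_fin.
have [r_eq|r_neq] := eqVneq r (Num.sqrt qh).
  have a_neq : a != alpha_hat h b qh by move: ra_neq; rewrite r_eq xpair_eqE eqxx.
  have rh0 : 0 < Num.sqrt qh by rewrite sqrtr_gt0.
  have := @Btilde_fin_lt _ h b h0 _ _ rh0 a1; rewrite sqr_sqrt_qh => /(_ a_neq).
  by rewrite r_eq sqr_sqrt_qh BscrE ltrD2r.
have r2_neq : r ^+ 2 != qh.
  by apply: contra r_neq => /eqP <-; rewrite sqrtr_sqr ger0_norm.
have Pr2 : qP b <= r ^+ 2 < 1.
  by rewrite r2_lt1 andbT -(sqr_sqrtr (qP_ge0 b)) ler_pXn2r ?nnegrE ?sqrtr_ge0.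
have := Bscr_lt_root h0 b0 qh_itv qh_root Pr2 r2_neq; rewrite !BscrE.
by have := Btilde_fin_le h b r a1; lra.
Qed.

End Maximizer.

Unset Implicit Arguments.

Theorem lemma5p3 (R : realType) (h beta : R) (hh : 0 < h) (hbeta : 0 < beta) :
  let LHS := [set Btilde h beta a r | r in Plef beta & a in `[-1, 1]] in
  let Q := `[qP beta, 1[%classic in
  ereal_sup LHS = ereal_sup [set (Bscr h beta q)%:E | q in Q]
  /\ (forall x y t, x \in Q -> y \in Q -> 0 <= t <= 1 ->
        t * Bscr h beta x + (1 - t) * Bscr h beta y
        <= Bscr h beta (t * x + (1 - t) * y))
  /\ exists qh : R,
       qh \in Q /\
           (forall q, q \in Q -> q != qh -> Bscr h beta q < Bscr h beta qh) /\
           qP beta < qh < 1 /\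
           qh / (h ^+ 2 + 2 * qh * beta ^+ 2) = (1 - qh) ^+ 2 /\
           (forall q, qP beta < q < 1 ->
              q / (h ^+ 2 + 2 * q * beta ^+ 2) = (1 - q) ^+ 2 -> q = qh) /\
           (let rh := Num.sqrt qh in
            let ah := h / Num.sqrt (h ^+ 2 + 2 * beta ^+ 2 * qh) in
            rh \in Plef beta /\ ah \in `[-1, 1] /\
                Btilde h beta ah rh = ereal_sup LHS /\
                forall r a, r \in Plef beta -> a \in `[-1, 1] ->
                  (r, a) != (rh, ah) ->
                  (Btilde h beta a r < Btilde h beta ah rh)%E).
Proof.
move=> LHS Q.
have [qh qh_itv qh_root] := Bscr_root_exists hh hbeta.
have qhQ : qh \in Q by rewrite in_itv_set; case/andP: qh_itv => /ltW -> ->.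
have Bscr_lt q : q \in Q -> q != qh -> Bscr h beta q < Bscr h beta qh.
  by rewrite in_itv_set; exact: Bscr_lt_root.
have rhP := sqrt_qh_Plef qh_itv.
have [ahI Bhat] := Btilde_hat hh hbeta qh_itv.
have supL : ereal_sup LHS = (Bscr h beta qh)%:E.
  apply: ereal_sup_attained => [|_ [r rP [a aI <-]]].
    by exists (Num.sqrt qh); [exact/set_mem | exists (alpha_hat h beta qh)].
  have [[-> ->]|ra_neq] := eqVneq (r, a) (Num.sqrt qh, alpha_hat h beta qh).
    by rewrite Bhat.
  by apply/ltW/Btilde_lt_hat => //; exact/mem_set.
have supR : ereal_sup [set (Bscr h beta q)%:E | q in Q] = (Bscr h beta qh)%:E.
  apply: ereal_sup_attained => [|_ [q qQ <-]]; first by exists qh => //; exact/set_mem.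
  rewrite lee_fin; have [->|q_neq] := eqVneq q qh; first exact: lexx.
  by apply/ltW/Bscr_lt => //; exact/mem_set.
split; first by rewrite supL supR.
split; first by move=> x y t; rewrite !in_itv_set; exact: Bscr_concave.
exists qh; do 4!split => //; split.
  by move=> q q_itv q_root; apply: (Bscr_root_unique hh hbeta qh_itv q_itv qh_root q_root).
move=> rh ah; do 2!split => //; split; first by rewrite supL.
by move=> r a rP aI ra_neq; rewrite Bhat; exact: Btilde_lt_hat.
Qed.
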